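(* For integers $k,l\geq1$ with $k+l\leq n$, the set $T_{k,l,n}$ is a Jacobi subset of $S_n$; that is, $\sum_{\sigma\in T_{k,l,n}}[a_{\sigma(1)},\dots,a_{\sigma(n)}]=0$ for all elements $a_1,\dots,a_n$ of every Lie ring.
   Context: A Lie ring is a Lie algebra over $\mathbb Z$; the left-normed bracket is $[a_1]=a_1$, $[a_1,\dots,a_n]=[[a_1,\dots,a_{n-1}],a_n]$. $S_m$ is the symmetric group on $\{1,\dots,m\}$ with product given by composition. A subset $T\subseteq S_n$ is Jacobi if $\sum_{\sigma\in T}[a_{\sigma(1)},\dots,a_{\sigma(n)}]=0$ for all elements $a_1,\dots,a_n$ of every Lie ring. For $m\leq n$, $\iota_{m,n}:S_m\hookrightarrow S_n$ is the canonical embedding. An $(s,t)$-shuffle is a pair $(\alpha,\beta)$ of strictly increasing maps $\alpha:\{1,\dots,s\}\to\{1,\dots,s+t\}$, $\beta:\{1,\dots,t\}\to\{1,\dots,s+t\}$ with disjoint images; ${\sf Sh}^1(s,t)$ is the set of those with $\alpha(1)=1$. For $p,q\geq1$, $0\leq i\leq q-1$ and $(\alpha,\beta)\in{\sf Sh}^1(q-i,i)$, let $\tilde\sigma_{\alpha,\beta,p,q}\in S_{p+q}$ be given by $\tilde\sigma(j)=j$ for $1\leq j\leq p$, $\tilde\sigma(p+j)=p+\beta(i+1-j)$ for $1\leq j\leq i$, $\tilde\sigma(p+i+j)=p+\alpha(j)$ for $1\leq j\leq q-i$; let $\sigma_{\alpha,\beta,p,q}=\tilde\sigma_{\alpha,\beta,p,q}\circ(1,2)^i$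 where $(1,2)$ is the transposition. Set $C_{p,q}=\{\sigma_{\alpha,\beta,p,q}\mid 0\leq i\leq q-1,\ (\alpha,\beta)\in{\sf Sh}^1(q-i,i)\}\subseteq S_{p+q}$. $\Phi_{k,l}\in S_{k+l}$ is defined by $\Phi_{k,l}(i)=i+k$ if $i\leq l$ and $\Phi_{k,l}(i)=i-l$ if $i>l$. Define $T_{k,l}=C_{k,l}\cup\{\Phi_{k,l}\circ\tau\mid\tau\in C_{l,k}\}\subseteq S_{k+l}$ and $T_{k,l,n}=\iota_{k+l,n}(T_{k,l})\subseteq S_n$. *)

From HB Require Import structures.
From mathcomp Require Import all_boot all_order all_algebra all_fingroup.
Set Implicit Arguments. Unset Strict Implicit. Unset Printing Implicit Defensive.
Import GRing.Theory.
Local Open Scope ring_scope.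

Definition lie_ring (L : zmodType) (br : L -> L -> L) : Prop :=
  [/\ (forall x y z, br (x + y) z = br x z + br y z),
      (forall x y z, br x (y + z) = br x y + br x z),
      (forall x, br x x = 0) &
      (forall x y z, br (br x y) z + br (br y z) x + br (br z x) y = 0)].

Definition lnb (L : zmodType) (br : L -> L -> L) (s : seq L) : L :=
  if s is x :: r then foldl br x r else 0.

(* Jacobi subset of S_n (S_n realised as 'S_n acting on 'I_n = {0..n-1},
   position j+1 in the paper corresponds to ordinal j). *)
Definition jacobi (n : nat) (T : {set 'S_n}) : Prop :=
  forall (L : zmodType) (br : L -> L -> L), lie_ring br ->
  forall a : 'I_n -> L,
    \sum_(s in T) lnb br [seq a (s i) | i <- enum 'I_n] = 0.

Local Close Scope ring_scope.

(* 1-based view of a permutation of 'I_m as a function on nat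
   (identity outside {1..m}). *)
Definition pfun (m : nat) (r : 'S_m) (j : nat) : nat :=
  match (insub j.-1 : option 'I_m) with Some i => (r i).+1 | None => j end.

(* 1-based view of a map {1..s} -> {1..m} given as 'I_s -> 'I_m. *)
Definition ffun1 (s m : nat) (f : {ffun 'I_s -> 'I_m}) (j : nat) : nat :=
  match (insub j.-1 : option 'I_s) with Some i => (f i).+1 | None => 0 end.

(* (alpha, beta) in Sh^1(s,t), in 0-based ordinal coordinates:
   strictly increasing, disjoint images, alpha(1) = 1. *)
Definition shuffle1 (s t : nat) (a : {ffun 'I_s -> 'I_(s + t)})
    (b : {ffun 'I_t -> 'I_(s + t)}) : bool :=
  [&& [forall i : 'I_s, forall j : 'I_s, (i < j) ==> (a i < a j)],
      [forall i : 'I_t, forall j : 'I_t, (i < j) ==> (b i < b j)],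
      [forall i : 'I_s, forall j : 'I_t, a i != b j] &
      [forall i : 'I_s, (val i == 0) ==> (val (a i) == 0)]].

(* tilde sigma_{alpha,beta,p,q}, 1-based, with i = #beta *)
Definition sig_tilde (p i : nat) (al be : nat -> nat) (j : nat) : nat :=
  if j <= p then j
  else if j <= p + i then p + be (i.+1 - (j - p))
  else p + al (j - p - i).

Definition swap12 (j : nat) : nat :=
  if j == 1 then 2 else if j == 2 then 1 else j.

Definition sig_fun (p i : nat) (al be : nat -> nat) (j : nat) : nat :=
  sig_tilde p i al be (iter i swap12 j).

Definition inC (p q : nat) (r : 'S_(p + q)) : bool :=
  [exists i : 'I_q, exists a : {ffun 'I_(q - i) -> 'I_(q - i + i)},
     exists b : {ffun 'I_i -> 'I_(q - i + i)},
     shuffle1 a b &&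
     [forall j : 'I_(p + q),
        pfun r j.+1 == sig_fun p i (ffun1 a) (ffun1 b) j.+1]].

Definition Phi (k l i : nat) : nat := if i <= l then i + k else i - l.

Definition inT (k l : nat) (r : 'S_(k + l)) : bool :=
  inC r ||
  [exists t : 'S_(l + k),
     inC t && [forall j : 'I_(k + l), pfun r j.+1 == Phi k l (pfun t j.+1)]].

Definition iota_fun (m : nat) (f : nat -> nat) (j : nat) : nat :=
  if j <= m then f j else j.

Definition Tset (k l n : nat) : {set 'S_n} :=
  [set s : 'S_n | [exists r : 'S_(k + l),
     inT r && [forall j : 'I_n, pfun s j.+1 == iota_fun (k + l) (pfun r) j.+1]]].

(* In a Lie ring, induction on q using the Jacobi identity expands
   [x, [b_1, ..., b_q]] as the signed sum of [x, b_(w_1), ..., b_(w_q)] over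
   the 2^(q-1) permutations w of 1..q that decrease down to 1 and then
   increase, the sign being (-1)^(position of 1 in w).  As words, the elements
   of C_{p,q} are exactly 1..p followed by such a w shifted by p, with the
   first two letters swapped when the sign is negative; since
   [a_2, a_1, ...] = - [a_1, a_2, ...], the sum over C_{p,q} is
   [[a_1, ..., a_p], [a_(p+1), ..., a_(p+q)]].  The two halves of T_{k,l}
   therefore contribute [X, Y] + [Y, X] = 0, and bracketing on the right with
   a_(k+l+1), ..., a_n keeps the sum zero. *)

From mathcomp Require Import all_boot all_order all_algebra all_fingroup.
From mathcomp Require Import zify.
Set Implicit Arguments. Unset Strict Implicit. Unset Printing Implicit Defensive.
Import GRing.Theory.

Section LieRing.

Variables (L : zmodType) (br : L -> L -> L).
Hypothesis Lbr : lie_ring br.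
Local Open Scope ring_scope.

Lemma lie_br0l z : br 0 z = 0.
Proof.
case: Lbr => brDl _ _ _; apply: (@addrI _ (br 0 z)).
by rewrite -brDl !addr0.
Qed.

Lemma lie_brNl x z : br (- x) z = - br x z.
Proof.
case: Lbr => brDl _ _ _; apply/eqP; rewrite -subr_eq0 opprK -brDl addNr.
by rewrite lie_br0l.
Qed.

Lemma lie_anti x z : br x z = - br z x.
Proof.
case: Lbr => brDl brDr alt _; apply/eqP; rewrite -addr_eq0.
by have := alt (x + z); rewrite brDl !brDr !alt add0r addr0 => ->.
Qed.

Lemma lie_jacobiB x y z : br (br x y) z - br (br x z) y = br x (br y z).
Proof.
case: Lbr => _ _ _ jac; have := jac x y z.
rewrite (lie_anti (br y z)) (lie_anti z x) lie_brNl => E.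
apply/eqP; rewrite -subr_eq0 -E; apply/eqP.
by rewrite -!addrA [- _ + _]addrC.
Qed.

Lemma lie_br_suml I (r : seq I) (F : I -> L) z :
  br (\sum_(i <- r) F i) z = \sum_(i <- r) br (F i) z.
Proof.
case: Lbr => brDl _ _ _.
by apply: (big_morph (br^~ z)) => [x y|]; [exact: brDl | exact: lie_br0l].
Qed.

Lemma foldl_br0 s : foldl br 0 s = 0.
Proof. by elim: s => //= c s IHs; rewrite lie_br0l. Qed.

Lemma foldl_brN s x : foldl br (- x) s = - foldl br x s.
Proof. by elim: s x => //= c s IHs x; rewrite lie_brNl IHs. Qed.

Lemma foldl_br_sum I (r : seq I) (F : I -> L) s :
  foldl br (\sum_(i <- r) F i) s = \sum_(i <- r) foldl br (F i) s.
Proof.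
case: Lbr => brDl _ _ _.
apply: (big_morph (foldl br^~ s)) => [x y|]; last exact: foldl_br0.
by elim: s x y => //= c s IHs x y; rewrite brDl IHs.
Qed.

End LieRing.

Lemma lnb_cat (L : zmodType) (br : L -> L -> L) s t :
  0 < size s -> lnb br (s ++ t) = foldl br (lnb br s) t.
Proof. by case: s => // x s _; rewrite /= foldl_cat. Qed.

Lemma lnb_rcons (L : zmodType) (br : L -> L -> L) s c :
  0 < size s -> lnb br (rcons s c) = br (lnb br s) c.
Proof. by rewrite -cats1 => /lnb_cat ->. Qed.

Lemma iota_rcons m n : iota m n.+1 = rcons (iota m n) (m + n).
Proof. by rewrite -cats1 -addn1 iotaD. Qed.

Lemma sorted_rcons (T : Type) (e : rel T) : transitive e -> forall s x,
  sorted e (rcons s x) = sorted e s && all (e^~ x) s.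
Proof.
move=> e_tr s x; rewrite -[rcons s x]revK rev_sorted rev_rcons /= path_sortedE.
  by rewrite all_rev rev_sorted andbC.
by move=> a b c ba cb; exact: e_tr cb ba.
Qed.

Lemma gtn_trans : transitive gtn.
Proof. by move=> a b c /= ba cb; exact: ltn_trans cb ba. Qed.

(* The permutations of [1..q] that decrease down to the letter 1 and then
   increase: the largest letter sits at one of the two ends. *)
Fixpoint valley_words (q : nat) : seq (seq nat) :=
  match q with
  | 0 => [::]
  | 1 => [:: [:: 1]]
  | q'.+1 => [seq rcons w q | w <- valley_words q'] ++
             [seq q :: w | w <- valley_words q']
  end.

Definition valley (q : nat) (w : seq nat) : bool :=
  [&& perm_eq w (iota 1 q), sorted gtn (take (index 1 w) w)
    & sorted ltn (drop (index 1 w) w)].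

Lemma valley_wordsS q : 0 < q ->
  valley_words q.+1 =
  [seq rcons w q.+1 | w <- valley_words q] ++ [seq q.+1 :: w | w <- valley_words q].
Proof. by case: q. Qed.

Lemma valley_bound q w x : valley q w -> x \in w -> 0 < x <= q.
Proof. by case/andP=> /perm_mem-> _; rewrite mem_iota add1n ltnS. Qed.

Lemma valley_mem1 q w : 0 < q -> valley q w -> 1 \in w.
Proof. by move=> q_gt0 /andP[/perm_mem-> _]; rewrite mem_iota. Qed.

Lemma valley_cons q v : 0 < q -> valley q v -> valley q.+1 (q.+1 :: v).
Proof.
move=> q_gt0 vv.
case/and3P: (vv) => pv dec inc.
rewrite /valley; have -> : index 1 (q.+1 :: v) = (index 1 v).+1.
  by rewrite /= eqn_leq ltnNge q_gt0.
rewrite iota_rcons perm_sym perm_rcons add1n perm_cons perm_sym pv /=.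
rewrite inc andbT path_sortedE ?dec ?andbT; last exact: gtn_trans.
by apply/allP=> x /mem_take xv; case/andP: (valley_bound vv xv).
Qed.

Lemma valley_rcons q v : 0 < q -> valley q v -> valley q.+1 (rcons v q.+1).
Proof.
move=> q_gt0 vv; have v1 := valley_mem1 q_gt0 vv.
have iv : index 1 v < size v by rewrite index_mem.
case/and3P: (vv) => pv dec inc.
rewrite /valley -cats1 index_cat v1 takel_cat ?(ltnW iv) // dec drop_cat iv.
rewrite iota_rcons -cats1 perm_cat2r pv cats1 sorted_rcons ?inc //=.
  by apply/allP=> x /mem_drop xv; case/andP: (valley_bound vv xv).
exact: ltn_trans.
Qed.

Lemma sorted_gtn_head s x : sorted gtn s -> x \in s -> x <= head 0 s.
Proof.
case: s => // y s; rewrite /= path_sortedE; last exact: gtn_trans.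
by case/andP=> /allP ys _; rewrite inE => /predU1P[->// | /ys /ltnW].
Qed.

Lemma sorted_ltn_last s x : sorted ltn s -> x \in s -> x <= last 0 s.
Proof.
case/lastP: s => // s y; rewrite sorted_rcons; last exact: ltn_trans.
by case/andP=> _ /allP sy; rewrite mem_rcons last_rcons inE => /predU1P[->// | /sy /ltnW].
Qed.

Lemma valley_max_take q w : valley q.+1 w -> q.+1 \in take (index 1 w) w ->
  exists2 v, valley q v & w = q.+1 :: v.
Proof.
move=> vw mt; case/and3P: (vw) => pw dec inc.
case: w => [|y v] // in pw dec inc vw mt *.
have y1 : y != 1 by apply: contraTneq mt => ->.
rewrite /= (negbTE y1) /= in dec inc mt.
have ym : y = q.+1.
  apply/eqP; rewrite eqn_leq; apply/andP; split.
    by case/andP: (valley_bound vw (mem_head y v)).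
  exact: (sorted_gtn_head (s := y :: _) dec mt).
subst y; exists v => //; apply/and3P; split=> //; last exact: path_sorted dec.
by move: pw; rewrite iota_rcons perm_sym perm_rcons add1n perm_cons perm_sym.
Qed.

Lemma valley_max_drop q w : 0 < q -> valley q.+1 w -> q.+1 \notin take (index 1 w) w ->
  exists2 v, valley q v & w = rcons v q.+1.
Proof.
move=> q_gt0 vw mNt; case/and3P: (vw) => pw dec inc.
have {mNt} md : q.+1 \in drop (index 1 w) w.
  have : q.+1 \in w by rewrite (perm_mem pw) mem_iota add1n ltnSn.
  by rewrite -{1}(cat_take_drop (index 1 w) w) mem_cat (negbTE mNt).
have w1 := valley_mem1 (ltn0Sn q) vw.
case/lastP: w => [|v y] // in pw dec inc vw w1 md *.
have v1 : 1 \in v.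
  apply: contraLR md => /negPf v1.
  have -> : y = 1 by move: w1; rewrite mem_rcons inE v1 orbF => /eqP.
  rewrite -cats1 index_cat v1 drop_cat ltnNge leq_addr /= addKn /= inE.
  by rewrite eqSS -lt0n q_gt0.
have iv : index 1 v <= size v by rewrite ltnW ?index_mem.
rewrite -cats1 index_cat v1 cats1 drop_rcons // in inc md.
have ym : y = q.+1.
  apply/eqP; rewrite eqn_leq; apply/andP; split.
    have y_in : y \in rcons v y by rewrite mem_rcons mem_head.
    by case/andP: (valley_bound vw y_in).
  by have := sorted_ltn_last inc md; rewrite last_rcons.
subst y; exists v => //.
move: dec inc; rewrite -cats1 index_cat v1 takel_cat //.
rewrite sorted_rcons => [dec /andP[inc _]|]; last exact: ltn_trans.
apply/and3P; split=> //.
by move: pw; rewrite iota_rcons -!cats1 add1n perm_cat2r.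
Qed.

Lemma mem_valley_words q w : 0 < q -> (w \in valley_words q) = valley q w.
Proof.
elim: q w => // -[_ w _ | q IHq w _].
  rewrite inE; apply/eqP/idP => [-> // | /and3P[pw _ _]].
  exact: perm_small_eq pw.
rewrite valley_wordsS // mem_cat; apply/idP/idP.
  by case/orP=> /mapP[v]; rewrite IHq // => vv ->;
    [exact: valley_rcons | exact: valley_cons].
move=> vw; apply/orP; case: (boolP (q.+2 \in take (index 1 w) w)) => [mt | mNt].
  by right; have [v vv ->] := valley_max_take vw mt; apply: map_f; rewrite IHq.
by left; have [v vv ->] := valley_max_drop (ltn0Sn q) vw mNt; apply: map_f; rewrite IHq.
Qed.

Lemma valley_words_perm q w : w \in valley_words q -> perm_eq w (iota 1 q).
Proof. by case: q => // q; rewrite mem_valley_words // => /and3P[]. Qed.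

Lemma valley_words_mem1 q w : w \in valley_words q -> 1 \in w.
Proof. by case: q => // q; rewrite mem_valley_words //; apply: valley_mem1. Qed.

Lemma uniq_valley_words q : uniq (valley_words q).
Proof.
elim: q => // -[// | q] IHq; rewrite valley_wordsS // cat_uniq.
rewrite !map_inj_uniq ?IHq ?andbT; last 2 first.
- by move=> x y [].
- by move=> x y /(congr1 rev); rewrite !rev_rcons => -[] /(congr1 rev); rewrite !revK.
apply/hasPn => _ /mapP[v vw ->]; apply/negP => /mapP[u uw].
case: u uw => [|x u] /valley_words_perm pu; first by move/perm_size: pu.
move=> [xE _]; have := perm_mem pu x.
by rewrite mem_head mem_iota -xE ltnn andbF.
Qed.

Definition signw (L : zmodType) (w : seq nat) (v : L) : L :=
  if odd (index 1 w) then (- v)%R else v.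

Lemma br_lnb_valley (L : zmodType) (br : L -> L -> L) : lie_ring br ->
  forall q x (b : nat -> L), 0 < q ->
  (\sum_(w <- valley_words q) signw w (foldl br x (map b w)))%R =
  br x (lnb br (map b (iota 1 q))).
Proof.
move=> Lbr; elim=> // -[_ x b _ | q IHq x b _].
  by rewrite big_seq1.
rewrite valley_wordsS // big_cat !big_map.
have signw_rcons w : w \in valley_words q.+1 ->
    signw (rcons w q.+2) (foldl br x (map b (rcons w q.+2))) =
    br (signw w (foldl br x (map b w))) (b q.+2).
  move=> /valley_words_mem1 w1; rewrite map_rcons foldl_rcons /signw -cats1.
  by rewrite index_cat w1; case: ifP => // _; rewrite lie_brNl.
have signw_cons w : signw (q.+2 :: w) (foldl br x (map b (q.+2 :: w))) =
    (- signw w (foldl br (br x (b q.+2)) (map b w)))%R.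
  by rewrite /signw /=; case: odd; rewrite ?opprK.
rewrite (eq_big_seq _ signw_rcons) (eq_bigr _ (fun w _ => signw_cons w)).
rewrite -lie_br_suml // sumrN !IHq // [iota 1 q.+2]iota_rcons map_rcons.
rewrite lnb_rcons ?size_map ?size_iota //.
exact: (lie_jacobiB Lbr).
Qed.

Section Words.

Variables s m : nat.
Implicit Types g h : 'I_s -> 'I_m.

Definition word (g : 'I_s -> 'I_m) : seq nat := [seq (g i).+1 | i <- enum 'I_s].

Lemma size_word g : size (word g) = s.
Proof. by rewrite size_map size_enum_ord. Qed.

Lemma nth_word g (i : 'I_s) : nth 0 (word g) i = (g i).+1.
Proof. by rewrite (nth_map i) ?size_enum_ord // nth_ord_enum. Qed.

Lemma word_bound g x : x \in word g -> 0 < x <= m.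
Proof. by case/mapP=> i _ ->; rewrite ltn_ord. Qed.

Lemma map_iota_word g (F : nat -> nat) :
  (forall i : 'I_s, F i.+1 = (g i).+1) -> map F (iota 1 s) = word g.
Proof.
move=> Fg; rewrite /word -[1]/(1 + 0) iotaDl -val_enum_ord -!map_comp.
by apply: eq_map => i /=; rewrite add1n Fg.
Qed.

Lemma forall_wordE g (F : nat -> nat) :
  [forall i : 'I_s, (g i).+1 == F i.+1] = (word g == map F (iota 1 s)).
Proof.
apply/forallP/eqP => [gF | gF i].
  by apply/esym/map_iota_word => i; apply/esym/eqP.
by rewrite -nth_word gF (nth_map 0) ?size_iota // nth_iota.
Qed.

Lemma word_inj g h : word g = word h -> g =1 h.
Proof. by move=> gh i; apply/val_inj/succn_inj; rewrite -!nth_word gh. Qed.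

Lemma sorted_word g :
  sorted ltn (word g) = [forall i : 'I_s, forall j : 'I_s, (i < j) ==> (g i < g j)].
Proof.
rewrite sorted_pairwise; last exact: ltn_trans.
apply/(pairwiseP 0)/forallP => [incr i | incr i j].
  apply/forallP=> j; apply/implyP=> ij.
  by have := incr i j; rewrite !inE size_word !ltn_ord !nth_word; apply.
rewrite !inE size_word => i_lt j_lt ij.
have /forallP/(_ (Ordinal j_lt))/implyP gij := incr (Ordinal i_lt).
by rewrite (nth_word g (Ordinal i_lt)) (nth_word g (Ordinal j_lt)) /= ltnS; exact: gij.
Qed.

Lemma word_surj (S : seq nat) : size S = s -> (forall x, x \in S -> 0 < x <= m) ->
  exists f : {ffun 'I_s -> 'I_m}, word f = S.
Proof.
move=> sizeS boundS.
have bound_nth (i : 'I_s) : 0 < nth 0 S i <= m.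
  by apply/boundS/mem_nth; rewrite sizeS.
have lt_m (i : 'I_s) : (nth 0 S i).-1 < m.
  by case/andP: (bound_nth i) => pos; rewrite prednK.
exists [ffun i => Ordinal (lt_m i)].
apply: (@eq_from_nth _ 0) => [|j]; rewrite size_word // => j_lt.
rewrite (nth_word _ (Ordinal j_lt)) ffunE prednK //.
by case/andP: (bound_nth (Ordinal j_lt)).
Qed.

End Words.

Lemma perm_iota1 m (u : seq nat) : uniq u -> size u = m ->
  (forall x, x \in u -> 0 < x <= m) -> perm_eq u (iota 1 m).
Proof.
move=> uu su bound; apply: uniq_perm => //; first exact: iota_uniq.
have sub : {subset u <= iota 1 m}.
  by move=> x /bound; rewrite mem_iota add1n ltnS.
by have [] := uniq_min_size uu sub; rewrite ?size_iota ?su.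
Qed.

Lemma word_perm_inj m (r t : 'S_m) : word r = word t -> r = t.
Proof. by move/word_inj=> rt; apply/permP. Qed.

Lemma word_perm_surj m (u : seq nat) :
  perm_eq u (iota 1 m) -> exists r : 'S_m, word r = u.
Proof.
move=> pu; have [|x|f fu] := @word_surj m m u.
- by rewrite (perm_size pu) size_iota.
- by rewrite (perm_mem pu) mem_iota add1n ltnS.
have f_inj : injective f.
  have : uniq (word f) by rewrite fu (perm_uniq pu) iota_uniq.
  by move/injectiveP=> inj i j fij; apply: inj; rewrite /= fij.
by exists (perm f_inj); rewrite -fu; apply: eq_map => i; rewrite permE.
Qed.

Lemma pfunE m (r : 'S_m) (j : 'I_m) : pfun r j.+1 = (r j).+1.
Proof. by rewrite /pfun /=; case: insubP => [i _ /val_inj-> | ]; rewrite ?ltn_ord. Qed.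

Lemma ffun1E s m (f : {ffun 'I_s -> 'I_m}) (j : 'I_s) : ffun1 f j.+1 = (f j).+1.
Proof. by rewrite /ffun1 /=; case: insubP => [i _ /val_inj-> | ]; rewrite ?ltn_ord. Qed.

Lemma forall_pfunE m (r : 'S_m) (F : nat -> nat) :
  [forall j : 'I_m, pfun r j.+1 == F j.+1] = (word r == map F (iota 1 m)).
Proof. by rewrite -forall_wordE; apply: eq_forallb => j; rewrite pfunE. Qed.

Lemma map_pfun m (r : 'S_m) : map (pfun r) (iota 1 m) = word r.
Proof. exact/map_iota_word/pfunE. Qed.

Lemma map_ffun1 s m (f : {ffun 'I_s -> 'I_m}) : map (ffun1 f) (iota 1 s) = word f.
Proof. exact/map_iota_word/ffun1E. Qed.

Lemma word_disjoint s t m (g : 'I_s -> 'I_m) (h : 'I_t -> 'I_m) :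
  [forall i, forall j, g i != h j] = ~~ has (mem (word h)) (word g).
Proof.
apply/forallP/hasPn => [gh _ /mapP[i _ ->] | gh i].
  by apply/mapP=> -[j _ /succn_inj/val_inj/eqP]; apply/negP: (forallP (gh i) j).
apply/forallP=> j; apply: contraTneq (gh _ (map_f _ (mem_enum _ i))) => ->.
by rewrite negbK; exact: (map_f (fun j => (h j).+1) (mem_enum _ j)).
Qed.

Definition swap2 (u : seq nat) : seq nat :=
  if u is x :: y :: r then y :: x :: r else u.

Lemma swap2K : involutive swap2.
Proof. by case=> [|x [|y r]]. Qed.

Lemma perm_swap2 u : perm_eq (swap2 u) u.
Proof. by case: u => [|x [|y r]] //=; apply/seq.permP => P /=; rewrite addnCA. Qed.

Lemma swap12K : involutive swap12.
Proof.
move=> j; rewrite /swap12; case: (eqVneq j 1) => [->|j1] //.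
by case: (eqVneq j 2) => [->|j2] //; rewrite (negbTE j1) (negbTE j2).
Qed.

Lemma iter_swap12 i j : iter i swap12 j = if odd i then swap12 j else j.
Proof. by elim: i => //= i ->; case: (odd i); rewrite /= ?swap12K. Qed.

Lemma map_swap12 (f : nat -> nat) m : 1 < m ->
  [seq f (swap12 j) | j <- iota 1 m] = swap2 [seq f j | j <- iota 1 m].
Proof.
case: m => [|[|m]] // _; rewrite /= /swap12 /=; congr [:: _, _ & _].
apply/eq_in_map => j; rewrite mem_iota => /andP[j_ge3 _].
by rewrite (gtn_eqF (leq_trans _ j_ge3)) // (gtn_eqF (leq_trans _ j_ge3)).
Qed.

Lemma rev_iota1 i : rev (iota 1 i) = [seq i.+1 - t | t <- iota 1 i].
Proof.
apply: (@eq_from_nth _ 0) => [|t]; rewrite size_rev ?size_map // size_iota => t_lt.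
by rewrite nth_rev ?size_iota // (nth_map 0) ?size_iota // !nth_iota //; lia.
Qed.

Lemma map_sig_tilde p i q (al be : nat -> nat) : i <= q ->
  [seq sig_tilde p i al be j | j <- iota 1 (p + q)] =
  iota 1 p ++ map (addn p) (rev (map be (iota 1 i)) ++ map al (iota 1 (q - i))).
Proof.
move=> le_iq; rewrite -{1}(subnKC le_iq) !iotaD !map_cat; congr (_ ++ _).
  rewrite -[RHS]map_id; apply/eq_in_map => j; rewrite mem_iota /sig_tilde.
  by case: ifP; lia.
congr (_ ++ _).
  rewrite -map_rev rev_iota1 -!map_comp addnC iotaDl -map_comp.
  apply/eq_in_map => t; rewrite mem_iota /sig_tilde /= => /andP[t_ge1 t_le].
  by case: ifP => [|_]; [lia | rewrite leq_add2l -ltnS -add1n t_le addKn].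
rewrite -map_comp -addnA addnC iotaDl -map_comp; apply/eq_in_map => t.
rewrite mem_iota /sig_tilde /= => /andP[t_ge1 _].
by case: ifP => [|_]; [lia | case: ifP => [|_]; [lia | congr (_ + al _); lia]].
Qed.

Lemma map_sig_fun p i q (al be : nat -> nat) : 0 < p -> i < q ->
  [seq sig_fun p i al be j | j <- iota 1 (p + q)] =
  (if odd i then swap2 else id)
    (iota 1 p ++ map (addn p) (rev (map be (iota 1 i)) ++ map al (iota 1 (q - i)))).
Proof.
move=> p_gt0 lt_iq; rewrite /sig_fun; under eq_map => j do rewrite iter_swap12.
have le_iq := ltnW lt_iq.
case: (odd i); last exact: map_sig_tilde.
rewrite map_swap12 ?map_sig_tilde //.
by rewrite -addn1 leq_add // (leq_trans _ lt_iq).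
Qed.

(* The word of sigma_{alpha,beta,p,q} for w = rev beta ++ alpha: here
   i = #beta is the index of the letter 1 in w, and (1,2)^i swaps the first
   two letters when i is odd. *)
Definition cword (p : nat) (w : seq nat) : seq nat :=
  (if odd (index 1 w) then swap2 else id) (iota 1 p ++ map (addn p) w).

Lemma index1_revcat B A : 1 \notin B -> head 0 A = 1 -> index 1 (rev B ++ A) = size B.
Proof.
move=> B1; rewrite index_cat mem_rev (negbTE B1) size_rev.
by case: A => //= x A ->; rewrite eqxx addn0.
Qed.

Lemma valley_revcat q B A : 1 \notin B -> head 0 A = 1 ->
  valley q (rev B ++ A) =
  [&& perm_eq (rev B ++ A) (iota 1 q), sorted ltn B & sorted ltn A].
Proof.
move=> B1 A1; rewrite /valley index1_revcat // -(size_rev B).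
by rewrite take_size_cat // drop_size_cat // rev_sorted.
Qed.

Section Shuffles.

Variables s t : nat.
Implicit Types (a : {ffun 'I_s -> 'I_(s + t)}) (b : {ffun 'I_t -> 'I_(s + t)}).

Lemma shuffle1_valley a b : 0 < s -> shuffle1 a b ->
  valley (s + t) (rev (word b) ++ word a) /\ index 1 (rev (word b) ++ word a) = t.
Proof.
move=> s_gt0 /and4P[incr_a incr_b disj /forallP a0].
have A1 : head 0 (word a) = 1.
  rewrite -nth0 (nth_word _ (Ordinal s_gt0)).
  by have /implyP/(_ isT)/eqP-> := a0 (Ordinal s_gt0).
have B1 : 1 \notin word b.
  move: disj; rewrite word_disjoint; apply: contra => b1; apply/hasP.
  by exists 1; rewrite // -A1 -nth0 mem_nth // size_word.
rewrite index1_revcat // size_word valley_revcat // !sorted_word incr_a incr_b.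
split=> //; apply/andP; split=> //; apply: perm_iota1.
- rewrite cat_uniq rev_uniq !(sorted_uniq ltn_trans ltnn) ?sorted_word //=.
  by rewrite andbT (eq_has (mem_rev _)) -word_disjoint.
- by rewrite size_cat size_rev !size_word addnC.
- by move=> x; rewrite mem_cat mem_rev => /orP[] /word_bound.
Qed.

Lemma valley_shuffle1 w : valley (s + t) w -> index 1 w = t ->
  exists a, exists2 b, shuffle1 a b & w = rev (word b) ++ word a.
Proof.
move=> vw iw; case/and3P: (vw) => pw; rewrite iw => dec inc.
have sw : size w = s + t by rewrite (perm_size pw) size_iota.
have [|x|a wa] := @word_surj s (s + t) (drop t w).
- by rewrite size_drop sw addnK.
- by move/mem_drop; apply: valley_bound.
have [|x|b wb] := @word_surj t (s + t) (rev (take t w)).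
- by rewrite size_rev size_takel // sw leq_addl.
- by rewrite mem_rev => /mem_take; apply: valley_bound.
have w_eq : w = rev (word b) ++ word a by rewrite wb wa revK cat_take_drop.
exists a; exists b => //; apply/and4P; split.
- by rewrite -sorted_word wa.
- by rewrite -sorted_word wb rev_sorted.
- rewrite word_disjoint wa wb (eq_has (mem_rev _)).
  case/and3P: vw => /perm_uniq; rewrite iota_uniq -{1}(cat_take_drop t w) cat_uniq.
  by rewrite has_sym => /and3P[].
apply/forallP=> i; apply/implyP=> /eqP i0; apply/eqP/succn_inj.
rewrite -(nth_word _ i) wa nth_drop i0 addn0 -iw nth_index //.
by apply: (valley_mem1 _ vw); rewrite addn_gt0 (leq_ltn_trans (leq0n _) (ltn_ord i)).
Qed.

End Shuffles.

Lemma perm_cword p q w : w \in valley_words q -> perm_eq (cword p w) (iota 1 (p + q)).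
Proof.
move=> /valley_words_perm pw; rewrite /cword.
have pw' : perm_eq (iota 1 p ++ map (addn p) w) (iota 1 (p + q)).
  by rewrite iotaD perm_cat2l (addnC 1 p) iotaDl perm_map.
by case: odd => //=; apply: perm_trans (perm_swap2 _) pw'.
Qed.

Lemma take2_swap2 u : take 2 (swap2 u) =i take 2 u.
Proof. by case: u => [|x [|y u]] z //=; rewrite take0 !inE orbC. Qed.

Lemma take2_cword p w : take 2 (cword p w) =i take 2 (iota 1 p ++ map (addn p) w).
Proof. by move=> x; rewrite /cword; case: odd; rewrite ?take2_swap2. Qed.

Lemma mem1_take2_cword p w : 0 < p -> 1 \in take 2 (cword p w).
Proof. by case: p => // p _; rewrite take2_cword. Qed.

Lemma take2_cword_le2 p w x : 1 < p -> x \in take 2 (cword p w) -> x <= 2.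
Proof.
by case: p => [|[|p]] // _; rewrite take2_cword //= take0 !inE => /orP[] /eqP->.
Qed.

Lemma head_cword p q w : 0 < p -> w \in valley_words q ->
  (head 0 (cword p w) == 1) = ~~ odd (index 1 w).
Proof.
case: p => // p _ vw; have := perm_uniq (perm_cword p.+1 vw).
rewrite iota_uniq /cword; case: odd => /=; last by rewrite eqxx.
have : 0 < size (iota 2 p ++ map (addn p.+1) w).
  by rewrite size_cat size_map addn_gt0 orbC; have := valley_words_mem1 vw; case: (w).
case: (iota 2 p ++ _) => [|x r] //= _.
by rewrite inE eq_sym => /andP[/norP[/negPf]].
Qed.

Lemma cword_inj p q : 0 < p -> {in valley_words q &, injective (cword p)}.
Proof.
move=> p_gt0 w1 w2 vw1 vw2 eq_cw.
have eq_odd : odd (index 1 w1) = odd (index 1 w2).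
  by apply: negb_inj; rewrite -(head_cword p_gt0 vw1) -(head_cword p_gt0 vw2) eq_cw.
move: eq_cw; rewrite /cword eq_odd => eq_cw.
have /(congr1 (drop p)) : iota 1 p ++ map (addn p) w1 = iota 1 p ++ map (addn p) w2.
  by case: odd eq_cw => // /(congr1 swap2); rewrite !swap2K.
by rewrite !drop_size_cat ?size_iota //; apply/inj_map/addnI.
Qed.

Definition Cwords (p q : nat) : seq (seq nat) := [seq cword p w | w <- valley_words q].

Definition Twords (k l : nat) : seq (seq nat) :=
  Cwords k l ++ map (map (Phi k l)) (Cwords l k).

Definition Tnwords (k l n : nat) : seq (seq nat) :=
  [seq u ++ iota (k + l).+1 (n - (k + l)) | u <- Twords k l].

Lemma Cwords_perm p q u : u \in Cwords p q -> perm_eq u (iota 1 (p + q)).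
Proof. by case/mapP=> w vw ->; apply: perm_cword. Qed.

Lemma uniq_Cwords p q : 0 < p -> uniq (Cwords p q).
Proof.
by move=> p_gt0; rewrite map_inj_in_uniq ?uniq_valley_words //; apply: cword_inj.
Qed.

Lemma inC_Cwords p q (r : 'S_(p + q)) : 0 < p -> 0 < q ->
  inC r = (word r \in Cwords p q).
Proof.
move=> p_gt0 q_gt0; apply/idP/idP.
  case/existsP=> i /existsP[a /existsP[b /andP[sh]]]; rewrite forall_pfunE => /eqP->.
  have qi_gt0 : 0 < q - i by rewrite subn_gt0.
  have [vw iw] := shuffle1_valley qi_gt0 sh.
  apply/mapP; exists (rev (word b) ++ word a).
    rewrite -[q in valley_words q](subnK (ltnW (ltn_ord i))).
    by rewrite mem_valley_words ?addn_gt0 ?qi_gt0.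
  by rewrite map_sig_fun // /cword iw !map_ffun1.
case/mapP=> w vw rw.
have lt_iq : index 1 w < q.
  rewrite -[q](size_iota 1) -(perm_size (valley_words_perm vw)) index_mem.
  exact: valley_words_mem1 vw.
pose i := Ordinal lt_iq.
have vw' : valley (q - i + i) w by rewrite subnK ?(ltnW lt_iq) // -mem_valley_words.
have [a [b sh w_eq]] := valley_shuffle1 vw' erefl.
apply/existsP; exists i; apply/existsP; exists a; apply/existsP; exists b.
by rewrite sh forall_pfunE map_sig_fun // !map_ffun1 -w_eq rw /cword eqxx.
Qed.

Lemma Phi_iota_low k l : map (Phi k l) (iota 1 l) = map (addn k) (iota 1 l).
Proof.
apply/eq_in_map => j; rewrite mem_iota add1n ltnS /Phi => /andP[_ le_jl].
by rewrite le_jl addnC.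
Qed.

Lemma Phi_iota_high k l : map (Phi k l \o addn l) (iota 1 k) = iota 1 k.
Proof.
rewrite -[RHS]map_id; apply/eq_in_map => j; rewrite mem_iota /Phi /= => /andP[j_gt0 _].
by rewrite -[X in _ <= X]addn0 leq_add2l leqNgt j_gt0 addKn.
Qed.

Lemma perm_Phi k l u :
  perm_eq u (iota 1 (l + k)) -> perm_eq (map (Phi k l) u) (iota 1 (k + l)).
Proof.
move=> pu; apply: perm_trans (perm_map _ pu) _.
rewrite iotaD map_cat Phi_iota_low (addnC 1 l) iotaDl -map_comp Phi_iota_high.
by rewrite perm_catC iotaD (addnC 1 k) iotaDl.
Qed.

Lemma PhiK k l j : 0 < j <= l + k -> Phi l k (Phi k l j) = j.
Proof.
rewrite /Phi => /andP[j_gt0 j_le]; case: (leqP j l) => j_l.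
  by rewrite leqNgt -{1}[k]add0n ltn_add2r j_gt0 addnK.
by rewrite leq_subLR j_le subnK // ltnW.
Qed.

Lemma Phi_eq1 k l j : 0 < k -> 0 < j -> Phi k l j = 1 -> j = l.+1.
Proof.
rewrite /Phi => k_gt0 j_gt0; case: ifP => [_ jk1 | /negbT].
  by have := leq_add j_gt0 k_gt0; rewrite jk1.
by rewrite -ltnNge => /ltnW lt_lj jl1; rewrite -(subnKC lt_lj) jl1 addn1.
Qed.

Lemma Twords_perm k l u : u \in Twords k l -> perm_eq u (iota 1 (k + l)).
Proof.
rewrite mem_cat => /orP[/Cwords_perm // | /mapP[v /Cwords_perm pv ->]].
exact: perm_Phi.
Qed.

(* The first two letters of a word of C_{k,l} include 1, and are {1, 2} when
   k > 1; those of a word of Phi o C_{l,k} include Phi 1 = k + 1, and include 1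
   only if the preimage l + 1 is among the first two letters of a word of
   C_{l,k}.  Hence a common word forces k = l = 1, a case checked directly. *)
Lemma Cwords_Phi_disjoint k l u : 0 < k -> 0 < l ->
  u \in Cwords k l -> u \in map (map (Phi k l)) (Cwords l k) -> False.
Proof.
move=> k_gt0 l_gt0 /mapP[w vw ->] /mapP[_ /mapP[w' vw' ->] eq_u].
have take2_u : take 2 (cword k w) = map (Phi k l) (take 2 (cword l w')).
  by rewrite eq_u map_take.
have k1 : k = 1.
  case: (ltnP 1 k) => [lt1k | ]; last by case: (k) k_gt0 => [|[|]].
  have : Phi k l 1 \in take 2 (cword k w) by rewrite take2_u map_f // mem1_take2_cword.
  by move/(take2_cword_le2 lt1k); rewrite /Phi l_gt0 add1n ltnS leqNgt lt1k.
have l1 : l = 1.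
  case: (ltnP 1 l) => [lt1l | ]; last by case: (l) l_gt0 => [|[|]].
  have : 1 \in map (Phi k l) (take 2 (cword l w')) by rewrite -take2_u mem1_take2_cword.
  case/mapP=> y y_in /esym/Phi_eq1 yl.
  have y_gt0 : 0 < y.
    have := perm_mem (perm_cword l vw') y.
    by rewrite (mem_take y_in) mem_iota => /esym/andP[].
  by have := take2_cword_le2 lt1l y_in; rewrite yl // ltnS leqNgt lt1l.
subst k l; move: vw vw' eq_u; rewrite !inE => /eqP-> /eqP->.
by [].
Qed.

Lemma uniq_Twords k l : 0 < k -> 0 < l -> uniq (Twords k l).
Proof.
move=> k_gt0 l_gt0; rewrite cat_uniq uniq_Cwords //=; apply/andP; split.
  by apply/hasPn => u Phi_u; apply/negP => C_u; apply: Cwords_Phi_disjoint C_u Phi_u.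
rewrite map_inj_in_uniq ?uniq_Cwords // => u v /Cwords_perm pu /Cwords_perm pv eq_uv.
have PhiK_on u' : perm_eq u' (iota 1 (l + k)) -> map (Phi l k) (map (Phi k l) u') = u'.
  move=> pu'; rewrite -map_comp -[RHS]map_id; apply/eq_in_map => j.
  by rewrite (perm_mem pu') mem_iota add1n ltnS => /PhiK.
by rewrite -(PhiK_on u pu) -(PhiK_on v pv) eq_uv.
Qed.

Lemma uniq_Tnwords k l n : 0 < k -> 0 < l -> uniq (Tnwords k l n).
Proof.
move=> k_gt0 l_gt0; rewrite map_inj_in_uniq ?uniq_Twords // => u v pu pv.
move/(congr1 (take (k + l))); rewrite !take_size_cat //.
  by rewrite (perm_size (Twords_perm pv)) size_iota.
by rewrite (perm_size (Twords_perm pu)) size_iota.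
Qed.

Lemma Tnwords_perm k l n u : k + l <= n -> u \in Tnwords k l n -> perm_eq u (iota 1 n).
Proof.
move=> le_n /mapP[v /Twords_perm pv ->].
by rewrite -(subnKC le_n) iotaD add1n addKn perm_cat2r.
Qed.

Lemma inT_Twords k l (r : 'S_(k + l)) : 0 < k -> 0 < l -> inT r = (word r \in Twords k l).
Proof.
move=> k_gt0 l_gt0; rewrite /inT (inC_Cwords r k_gt0 l_gt0) /Twords mem_cat.
congr (_ || _).
have forall_PhiE (t : 'S_(l + k)) :
    [forall j : 'I_(k + l), pfun r j.+1 == Phi k l (pfun t j.+1)] =
    (word r == map (Phi k l) (word t)).
  by rewrite (forall_pfunE r (Phi k l \o pfun t)) map_comp [in iota 1 _]addnC map_pfun.
apply/existsP/idP => [[t /andP[Ct]] | /mapP[_ /mapP[w vw ->] rw]].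
  by rewrite forall_PhiE (inC_Cwords t l_gt0 k_gt0) in Ct * => /eqP->; apply: map_f.
have [t tw] := word_perm_surj (perm_cword l vw).
by exists t; rewrite forall_PhiE (inC_Cwords t l_gt0 k_gt0) tw map_f //= rw.
Qed.

Lemma map_iota_fun m n (r : 'S_m) : m <= n ->
  map (iota_fun m (pfun r)) (iota 1 n) = word r ++ iota m.+1 (n - m).
Proof.
move=> le_mn; rewrite -(subnKC le_mn) iotaD map_cat addKn -map_pfun add1n; congr (_ ++ _).
  by apply/eq_in_map => j; rewrite mem_iota /iota_fun add1n ltnS => /andP[_ ->].
rewrite -[RHS]map_id; apply/eq_in_map => j; rewrite mem_iota /iota_fun => /andP[lt_mj _].
by rewrite leqNgt lt_mj.
Qed.

Lemma Tset_Tnwords k l n (s : 'S_n) : 0 < k -> 0 < l -> k + l <= n ->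
  (s \in Tset k l n) = (word s \in Tnwords k l n).
Proof.
move=> k_gt0 l_gt0 le_n; rewrite inE.
apply/existsP/idP => [[r /andP[]] | /mapP[u Tu su]].
  rewrite (inT_Twords r k_gt0 l_gt0) forall_pfunE map_iota_fun // => Tr /eqP->.
  exact: map_f.
have [r ru] := word_perm_surj (Twords_perm Tu).
exists r; rewrite (inT_Twords r k_gt0 l_gt0) forall_pfunE map_iota_fun //.
by rewrite ru Tu su eqxx.
Qed.

Section BracketSums.

Variables (L : zmodType) (br : L -> L -> L).
Hypothesis Lbr : lie_ring br.
Variable A : nat -> L.
Local Open Scope ring_scope.

Lemma lnb_swap2 u : (1 < size u)%N -> lnb br (map A (swap2 u)) = - lnb br (map A u).
Proof. by case: u => [|x [|y u]] //= _; rewrite (lie_anti Lbr) (foldl_brN Lbr). Qed.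

Lemma lnb_cword p q w : (0 < p)%N -> w \in valley_words q ->
  lnb br (map A (cword p w)) =
  signw w (foldl br (lnb br (map A (iota 1 p))) (map (A \o addn p) w)).
Proof.
move=> p_gt0 vw; have size_cat_gt1 : (1 < size (iota 1 p ++ map (addn p) w))%N.
  rewrite size_cat size_map (perm_size (valley_words_perm vw)) !size_iota.
  by case: q vw => // q _; rewrite addnS ltnS ltn_addr.
rewrite /cword /signw; case: odd; rewrite ?lnb_swap2 //;
  by rewrite map_cat lnb_cat ?size_map ?size_iota // -map_comp.
Qed.

Lemma sum_Cwords p q : (0 < p)%N -> (0 < q)%N ->
  \sum_(u <- Cwords p q) lnb br (map A u) =
  br (lnb br (map A (iota 1 p))) (lnb br (map (A \o addn p) (iota 1 q))).
Proof.
move=> p_gt0 q_gt0; rewrite big_map (eq_big_seq _ (fun w => lnb_cword p_gt0)).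
by rewrite (br_lnb_valley Lbr) // map_comp.
Qed.

End BracketSums.

Lemma sum_Twords (L : zmodType) (br : L -> L -> L) (A : nat -> L) k l :
  lie_ring br -> (0 < k)%N -> (0 < l)%N ->
  (\sum_(u <- Twords k l) lnb br (map A u) = 0)%R.
Proof.
move=> Lbr k_gt0 l_gt0; rewrite big_cat big_map /= !sum_Cwords //.
under eq_bigr => u _ do rewrite -map_comp.
rewrite sum_Cwords // (map_comp A (Phi k l \o addn l)) Phi_iota_high.
rewrite (map_comp A (Phi k l)) Phi_iota_low -map_comp.
by rewrite [X in (_ + X)%R](lie_anti Lbr) addrN.
Qed.

Lemma sum_Tnwords (L : zmodType) (br : L -> L -> L) (A : nat -> L) k l n :
  lie_ring br -> (0 < k)%N -> (0 < l)%N ->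
  (\sum_(u <- Tnwords k l n) lnb br (map A u) = 0)%R.
Proof.
move=> Lbr k_gt0 l_gt0; pose tail := iota (k + l).+1 (n - (k + l)).
have lnb_ext u : u \in Twords k l ->
    lnb br (map A (u ++ tail)) = foldl br (lnb br (map A u)) (map A tail).
  move=> /Twords_perm/perm_size; rewrite size_iota map_cat => size_u.
  by rewrite lnb_cat // size_map size_u addn_gt0 k_gt0.
by rewrite big_map (eq_big_seq _ lnb_ext) -foldl_br_sum // sum_Twords // foldl_br0.
Qed.

Lemma perm_Tset_Tnwords k l n : 0 < k -> 0 < l -> k + l <= n ->
  perm_eq [seq word s | s : 'S_n <- enum (Tset k l n)] (Tnwords k l n).
Proof.
move=> k_gt0 l_gt0 le_n; apply: uniq_perm; last 1 first.
- move=> u; apply/mapP/idP => [[s] | Tu].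
    by rewrite mem_enum Tset_Tnwords // => Ts ->.
  have [s su] := word_perm_surj (Tnwords_perm le_n Tu).
  by exists s; rewrite // mem_enum Tset_Tnwords // su.
- by rewrite (map_inj_uniq (@word_perm_inj n)) enum_uniq.
- exact: uniq_Tnwords.
Qed.

Theorem theorem1 (k l n : nat) :
  1 <= k -> 1 <= l -> k + l <= n -> jacobi (Tset k l n).
Proof.
move=> k_gt0 l_gt0 le_n L br Lbr a.
pose A (j : nat) : L := if insub j.-1 is Some i then a i else 0%R.
have map_A (s : 'S_n) : [seq a (s i) | i <- enum 'I_n] = map A (word s).
  rewrite /word -map_comp; apply: eq_map => i /=.
  by rewrite /A /=; case: insubP => [j _ /val_inj-> | ]; rewrite ?ltn_ord.
under eq_bigr => s _ do rewrite map_A.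
rewrite -big_enum -(big_map (fun s : 'S_n => word s) predT (fun u => lnb br (map A u))).
by rewrite (perm_big _ (perm_Tset_Tnwords k_gt0 l_gt0 le_n)) sum_Tnwords.
Qed.
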